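(* For the BDSSEP with parameters $0<\alpha\le\beta<1$ on $\Omega_N=\{0,1\}^{\{1,\dots,N-1\}}$, the mixing time satisfies $T^{\rm mix}_N\le \frac12 N^3$ for every $N\ge2$.
   Context: The BDSSEP is the continuous-time Markov chain on $\Omega_N$ with generator $$(L_Nf)(\eta)=\tfrac12\sum_{x=1}^{N-2}[f(\sigma^{x,x+1}\eta)-f(\eta)]+\tfrac12\{\alpha[1-\eta(1)]+(1-\alpha)\eta(1)\}[f(\sigma^1\eta)-f(\eta)]+\tfrac12\{\beta[1-\eta(N-1)]+(1-\beta)\eta(N-1)\}[f(\sigma^{N-1}\eta)-f(\eta)],$$ where $\sigma^{x,x+1}\eta$ exchanges $\eta(x),\eta(x+1)$ and $\sigma^x\eta$ flips $\eta(x)$; $\nu^N_{\alpha,\beta}$ is its stationary distribution. With $P_t(\eta,\xi)=\mathbb P_\eta[\eta(t)=\xi]$, $T^{\rm mix}_N=\inf\{t>0:\max_{\eta}\|P_t(\eta,\cdot)-\nu^N_{\alpha,\beta}\|_{\rm TV}\le1/4\}$. *)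

From HB Require Import structures.
From mathcomp Require Import all_boot all_order all_algebra.
From mathcomp Require Import all_classical all_reals all_analysis.
Set Implicit Arguments. Unset Strict Implicit. Unset Printing Implicit Defensive.
Import Order.TTheory GRing.Theory Num.Theory.
Local Open Scope classical_set_scope.
Local Open Scope ring_scope.

(* Configurations: Omega_N = {0,1}^{1,...,N-1}; site x (1 <= x <= N-1) is the
   ordinal x-1 of 'I_(N.-1). *)
Definition config (N : nat) := {ffun 'I_N.-1 -> bool}.

Definition occ N (eta : config N) (x : nat) : bool :=
  match @insub _ (fun i => i < N.-1)%N _ x.-1 with
  | Some i => eta i | None => false end.

Definition swap N (eta : config N) (x : nat) : config N :=
  [ffun i : 'I_N.-1 => if (val i).+1 == x then occ eta x.+1
                      else if (val i).+1 == x.+1 then occ eta x else eta i].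

Definition flip N (eta : config N) (x : nat) : config N :=
  [ffun i : 'I_N.-1 => if (val i).+1 == x then ~~ eta i else eta i].

Definition b2R (R : realType) (b : bool) : R := (b : nat)%:R.

Definition genL (R : realType) N (alpha beta : R) (f : config N -> R)
  (eta : config N) : R :=
  2^-1 * (\sum_(1 <= x < N.-1) (f (swap eta x) - f eta))
  + 2^-1 * (alpha * (1 - b2R R (occ eta 1)) + (1 - alpha) * b2R R (occ eta 1))
         * (f (flip eta 1) - f eta)
  + 2^-1 * (beta * (1 - b2R R (occ eta N.-1)) + (1 - beta) * b2R R (occ eta N.-1))
         * (f (flip eta N.-1) - f eta).

Definition indic (R : realType) N (xi : config N) : config N -> R :=
  fun eta => b2R R (eta == xi).

(* P_t(eta, xi) = (e^{t L_N} 1_xi)(eta) = sum_k t^k/k! (L_N^k 1_xi)(eta) *)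
Definition Pt (R : realType) N (alpha beta : R) (t : R)
  (eta xi : config N) : R :=
  limn (fun n => \sum_(0 <= k < n)
     (t ^+ k / (k`!)%:R * iter k (genL alpha beta) (indic R xi) eta)).

Definition stationary (R : realType) N (alpha beta : R) (nu : config N -> R) :=
  [/\ forall xi, 0 <= nu xi, \sum_xi nu xi = 1 &
      forall f : config N -> R, \sum_eta nu eta * genL alpha beta f eta = 0].

Definition tv_dist (R : realType) N (mu nu : config N -> R) : R :=
  2^-1 * \sum_xi `|mu xi - nu xi|.

Definition max_tv (R : realType) N (alpha beta : R) (nu : config N -> R)
  (t : R) : R :=
  \big[Num.max/0]_(eta : config N) tv_dist (Pt alpha beta t eta) nu.

Definition Tmix_set (R : realType) N (alpha beta : R) (nu : config N -> R) :
  set R := [set t | 0 < t /\ max_tv alpha beta nu t <= 4^-1].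

Definition Tmix (R : realType) N (alpha beta : R) (nu : config N -> R) : R :=
  inf (Tmix_set alpha beta nu).

From Pilot Require Import Defs.
From mathcomp Require Import all_boot all_order all_algebra.
From mathcomp Require Import all_classical all_reals all_analysis.
From mathcomp Require Import ring lra zify.
Import Order.TTheory GRing.Theory Num.Theory.
Import numFieldNormedType.Exports.
Local Open Scope classical_set_scope.
Local Open Scope ring_scope.

(* Run two copies of the BDSSEP under the basic coupling: bulk exchanges are
   performed simultaneously, and at a boundary site the copies flip together
   when they agree and independently otherwise.  The weighted discrepancy
   V = sum_s 1[eta(s) <> zeta(s)] s (N - s) satisfies L V <= -(4 / N^2) V,
   because s (N - s) vanishes at 0 and N, has discrete Laplacian -2 and is at
   most N^2 / 4.  Hence e^{tL} V <= e^{-4t/N^2} (N - 1) N^2 / 4, while V >= N - 1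
   off the diagonal, so two copies are at total variation distance at most
   e^{-4t/N^2} N^2 / 4; averaging over a stationary start and taking t = N^3 / 2
   gives e^{-2N} N^2 / 4 <= 1 / 4.
   The semigroup is the exponential series of L.  To compare such series we
   write L = (L + N) - N: the operator L + N is positive, so e^{t(L + N)} is
   monotone, and e^{tL} = e^{-Nt} e^{t(L + N)} by a Cauchy product. *)

Section ExponentialSeries.
Variable R : realType.

Lemma sum_antidiagonal (F : nat -> nat -> R) n :
  \sum_(k < n) \sum_(j < k.+1) F j (k - j)%N = \sum_(j < n) \sum_(m < n - j) F j m.
Proof.
elim: n => [|n IH]; first by rewrite !big_ord0.
rewrite big_ord_recr /= IH [RHS]big_ord_recr /=.
have -> : \sum_(j < n) \sum_(m < n.+1 - j) F j m =
   \sum_(j < n) \sum_(m < n - j) F j m + \sum_(j < n) F j (n - j)%N.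
  rewrite -big_split /=; apply: eq_bigr => j _.
  by rewrite subSn ?(ltnW (ltn_ord j)) // big_ord_recr.
rewrite -addrA; congr (_ + _).
by rewrite big_ord_recr /= subSnn subnn big_ord1.
Qed.

Lemma sum_square_sub_antidiagonal (F : nat -> nat -> R) n :
  \sum_(j < n) \sum_(m < n) F j m - \sum_(k < n) \sum_(j < k.+1) F j (k - j)%N
  = \sum_(j < n) \sum_(n - j <= m < n) F j m.
Proof.
rewrite sum_antidiagonal -sumrB; apply: eq_bigr => j _.
rewrite -(big_mkord xpredT (F j)) -(big_mkord xpredT (F j)).
rewrite (@big_cat_nat _ _ _ (n - j)) ?leq_subr //=.
by rewrite addrAC subrr add0r.
Qed.

Lemma bin_div_fact k j : (j <= k)%N ->
  'C(k, j)%:R / k`!%:R = (j`!%:R)^-1 * ((k - j)`!%:R)^-1 :> R.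
Proof.
move=> jk; rewrite -(bin_fact jk) !natrM.
have j0 : (j`!%:R : R) != 0 by rewrite pnatr_eq0 -lt0n fact_gt0.
have kj0 : ((k - j)`!%:R : R) != 0 by rewrite pnatr_eq0 -lt0n fact_gt0.
have bin0 : ('C(k, j)%:R : R) != 0 by rewrite pnatr_eq0 -lt0n bin_gt0.
by rewrite invfM mulrA divff // mul1r invfM.
Qed.

Lemma exp_coeffD (a b : R) k :
  exp_coeff (a + b) k = \sum_(j < k.+1) exp_coeff a j * exp_coeff b (k - j)%N.
Proof.
rewrite /exp_coeff /= addrC exprDn mulr_suml; apply: eq_bigr => j _.
have jk : (j <= k)%N by rewrite -ltnS.
rewrite -mulr_natr.
transitivity (a ^+ j * b ^+ (k - j) * ('C(k, j)%:R / k`!%:R)); first by ring.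
by rewrite bin_div_fact //; ring.
Qed.

Lemma cvg_series_exp_coeff (a : R) : series (exp_coeff a) @ \oo --> expR a.
Proof. exact: is_cvg_series_exp_coeff. Qed.

Lemma is_cvg_series_exp_dominated (u : R ^nat) a M : 0 <= a ->
  (forall j, `|u j| <= M * exp_coeff a j) -> cvgn (series u).
Proof.
move=> a0 Hu; apply: normed_cvg.
apply: (@series_le_cvg R _ (M *: exp_coeff a)).
- by move=> n /=.
- by move=> n; exact: le_trans (normr_ge0 _) (Hu n).
- exact: Hu.
by apply: is_cvg_seriesZ; exact: is_cvg_series_exp_coeff.
Qed.

(* Mertens' theorem for series dominated by exponential series: the gap between
   the square and the triangle of the Cauchy product is bounded by the same gap
   for [exp a * exp b = exp (a + b)], which tends to 0. *)
Lemma cvg_cauchy_product_exp (u v : R ^nat) a b M : 0 <= a -> 0 <= b ->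
  (forall j, `|u j| <= M * exp_coeff a j) -> (forall m, `|v m| <= exp_coeff b m) ->
  (fun n => \sum_(k < n) \sum_(j < k.+1) u j * v (k - j)%N) @ \oo -->
    limn (series u) * limn (series v).
Proof.
move=> a0 b0 Hu Hv.
have cu : cvgn (series u) by exact: is_cvg_series_exp_dominated Hu.
have cv : cvgn (series v).
  by apply: (@is_cvg_series_exp_dominated _ b 1) => // m; rewrite mul1r.
pose P n := series u n * series v n.
pose C n := \sum_(k < n) \sum_(j < k.+1) u j * v (k - j)%N.
pose E n := series (exp_coeff a) n * series (exp_coeff b) n
            - series (exp_coeff (a + b)) n.
have PC_E n : `|P n - C n| <= M * E n.
  have -> : P n - C n = \sum_(j < n) \sum_(n - j <= m < n) u j * v m.
    rewrite -(sum_square_sub_antidiagonal (fun j m => u j * v m)) /P !seriesEord.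
    by rewrite mulr_suml; congr (_ - _); apply: eq_bigr => j _; rewrite mulr_sumr.
  have -> : E n = \sum_(j < n) \sum_(n - j <= m < n) exp_coeff a j * exp_coeff b m.
    rewrite -(sum_square_sub_antidiagonal (fun j m => exp_coeff a j * exp_coeff b m)).
    rewrite /E !seriesEord mulr_suml; congr (_ - _).
      by apply: eq_bigr => j _; rewrite mulr_sumr.
    by apply: eq_bigr => k _; rewrite exp_coeffD.
  rewrite mulr_sumr (le_trans (ler_norm_sum _ _ _)) //.
  apply: ler_sum => j _; rewrite mulr_sumr (le_trans (ler_norm_sum _ _ _)) //.
  by apply: ler_sum => m _; rewrite normrM mulrA ler_pM.
have E0 : E @ \oo --> 0.
  rewrite -(subrr (expR (a + b))) [X in X - _]expRD.
  by apply: cvgB; [apply: cvgM|]; exact: cvg_series_exp_coeff.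
have PC0 : (fun n => P n - C n) @ \oo --> 0.
  apply: (@squeeze_cvgr _ _ _ _ (fun n => - (M * E n)) (fun n => M * E n)).
  - by apply: nearW => n; rewrite -ler_norml PC_E.
  - by rewrite -oppr0 -(mulr0 M); apply: cvgN; exact: cvgMl_tmp.
  - by rewrite -(mulr0 M); exact: cvgMl_tmp.
change (C @ \oo --> limn (series u) * limn (series v)).
have -> : C = (fun n => P n - (P n - C n)) by apply/funext => n; rewrite subKr.
by rewrite -[X in _ --> X]subr0; apply: cvgB => //; exact: cvgM.
Qed.

End ExponentialSeries.

Section LinearOperators.
Context {R : realType} {T : finType}.

Definition op_linear (O : (T -> R) -> T -> R) :=
  forall k1 k2 f g,
    O (fun x => k1 * f x + k2 * g x) = fun x => k1 * O f x + k2 * O g x.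

Context {O : (T -> R) -> T -> R}.
Hypothesis O_linear : op_linear O.

Lemma op_linearZ k f : O (fun x => k * f x) = fun x => k * O f x.
Proof.
have := O_linear k 0 f f.
under eq_fun do rewrite mul0r addr0.
by move=> ->; apply/funext => x; rewrite mul0r addr0.
Qed.

Lemma op_linear_sum {I : Type} (r : seq I) (a : I -> R) (F : I -> T -> R) :
  O (fun x => \sum_(i <- r) a i * F i x) = fun x => \sum_(i <- r) a i * O (F i) x.
Proof.
elim: r => [|i r IH].
  under eq_fun do rewrite big_nil.
  have := op_linearZ 0 (fun _ => 0); under eq_fun do rewrite mul0r.
  by move=> ->; apply/funext => x; rewrite big_nil mul0r.
have := O_linear (a i) 1 (F i) (fun x => \sum_(j <- r) a j * F j x).
rewrite (_ : (fun x => a i * F i x + 1 * (\sum_(j <- r) a j * F j x)) =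
   (fun x => \sum_(j <- i :: r) a j * F j x)); last first.
  by apply/funext => x; rewrite big_cons mul1r.
by move=> ->; rewrite IH; apply/funext => x; rewrite big_cons mul1r.
Qed.

End LinearOperators.

Section ShiftedOperator.
Context {R : realType} {T : finType} {A : (T -> R) -> T -> R} {c : R}.
Hypotheses (c_ge0 : 0 <= c) (A_linear : op_linear A)
  (A_shift_pos : forall f, (forall x, 0 <= f x) -> forall x, 0 <= A f x + c * f x)
  (A_cst : A (fun _ => 1) = fun _ => 0).

Definition shift_op (f : T -> R) := fun x => A f x + c * f x.

Lemma shift_op_linear : op_linear shift_op.
Proof. by move=> k1 k2 f g; rewrite /shift_op A_linear; apply/funext => x; ring. Qed.

Lemma iter_shift_op_linear j : op_linear (iter j shift_op).
Proof. by elim: j => [|j IH] k1 k2 f g //=; rewrite IH shift_op_linear. Qed.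

Lemma iter_shift_op_ge0 j f : (forall x, 0 <= f x) -> forall x, 0 <= iter j shift_op f x.
Proof. by move=> f0; elim: j => [|j IH] /=; [exact: f0 | exact: A_shift_pos]. Qed.

Lemma iter_shift_op_mono j f g :
  (forall x, f x <= g x) -> forall x, iter j shift_op f x <= iter j shift_op g x.
Proof.
move=> fg; have -> : g = fun x => 1 * f x + 1 * (g x - f x).
  by apply/funext => x; rewrite !mul1r addrC subrK.
rewrite iter_shift_op_linear => x; rewrite !mul1r lerDl.
by apply: iter_shift_op_ge0 => y; rewrite subr_ge0.
Qed.

Lemma iter_shift_op_cst j K : iter j shift_op (fun _ => K) = fun _ => K * c ^+ j.
Proof.
elim: j => [|j IH] /=; first by apply/funext => x; rewrite mulr1.
rewrite IH /shift_op.
have := op_linearZ A_linear (K * c ^+ j) (fun _ => 1).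
under eq_fun do rewrite mulr1.
by move=> ->; rewrite A_cst; apply/funext => x; rewrite exprS; ring.
Qed.

Lemma iter_shift_op_norm j f K :
  (forall x, `|f x| <= K) -> forall x, `|iter j shift_op f x| <= K * c ^+ j.
Proof.
move=> fK x; rewrite ler_norml; apply/andP; split.
  have := @iter_shift_op_mono j (fun _ => - K) f _ x.
  rewrite iter_shift_op_cst mulNr; apply => y.
  by move: (fK y); rewrite ler_norml => /andP[].
have := @iter_shift_op_mono j f (fun _ => K) _ x.
by rewrite iter_shift_op_cst; apply => y; exact: le_trans (ler_norm _) (fK y).
Qed.

Lemma iter_shift_op_le_exprn j V mu : (forall x, 0 <= V x) -> 0 <= mu ->
  (forall x, shift_op V x <= mu * V x) ->
  forall x, iter j shift_op V x <= mu ^+ j * V x.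
Proof.
move=> V0 mu0 HV; elim: j => [|j IH] x /=; first by rewrite mul1r.
apply: (@le_trans _ _ (shift_op (fun y => mu ^+ j * V y) x)).
  exact: (@iter_shift_op_mono 1 _ _ IH).
by rewrite op_linearZ ?exprSr -?mulrA ?ler_wpM2l ?exprn_ge0 //; exact: shift_op_linear.
Qed.

Lemma sum_binomial_shift_step (b : nat -> R) k :
  \sum_(j < k.+1) 'C(k, j)%:R * (- c) ^+ (k - j) * (b j.+1 - c * b j) =
  \sum_(j < k.+2) 'C(k.+1, j)%:R * (- c) ^+ (k.+1 - j) * b j.
Proof.
rewrite [RHS]big_ord_recl /= bin0 subn0.
have -> : \sum_(i < k.+1) 'C(k.+1, lift ord0 i)%:R * (- c) ^+ (k.+1 - lift ord0 i)
            * b (lift ord0 i)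
  = \sum_(i < k.+1) 'C(k, i)%:R * (- c) ^+ (k - i) * b i.+1
  + \sum_(i < k.+1) 'C(k, i.+1)%:R * (- c) ^+ (k - i) * b i.+1.
  rewrite -big_split /=; apply: eq_bigr => i _.
  by rewrite /bump /= add1n binS subSS natrD; ring.
rewrite addrCA.
have -> : \sum_(j < k.+1) 'C(k, j)%:R * (- c) ^+ (k - j) * (b j.+1 - c * b j) =
  \sum_(j < k.+1) 'C(k, j)%:R * (- c) ^+ (k - j) * b j.+1 +
  \sum_(j < k.+1) 'C(k, j)%:R * ((- c) ^+ (k - j) * (- c)) * b j.
  by rewrite -big_split /=; apply: eq_bigr => j _; ring.
congr (_ + _).
rewrite big_ord_recl /= bin0 subn0 -exprSr.
rewrite [RHS]addrC big_ord_recr /= bin_small // !mul0r addr0 addrC.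
by congr (_ + _); apply: eq_bigr => i _; rewrite /bump /= add1n -exprSr subnSK.
Qed.

(* [A = shift_op - c] with commuting summands, so the binomial formula applies. *)
Lemma iter_op_binomial k f : iter k A f =
  fun x => \sum_(j < k.+1) ('C(k, j)%:R * (- c) ^+ (k - j)) * iter j shift_op f x.
Proof.
elim: k => [|k IH] /=.
  by apply/funext => x; rewrite big_ord1 /= bin0 expr0 !mul1r.
rewrite IH (op_linear_sum A_linear); apply/funext => x.
rewrite -(sum_binomial_shift_step (fun j => iter j shift_op f x)).
by apply: eq_bigr => j _ /=; rewrite /shift_op; ring.
Qed.

Context {t : R}.
Hypothesis t_ge0 : 0 <= t.

Definition shift_exp_term f x j := exp_coeff t j * iter j shift_op f x.

(* [e^{t (A + c)} f], monotone in [f] because [A + c] is a positive operator. *)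
Definition shift_exp f x := limn (series (shift_exp_term f x)).

Lemma shift_exp_term_bound f x j :
  `|shift_exp_term f x j| <= (\sum_y `|f y|) * exp_coeff (c * t) j.
Proof.
rewrite /shift_exp_term normrM ger0_norm ?exp_coeff_ge0 //.
have fK : forall y, `|f y| <= \sum_z `|f z|.
  by move=> y; rewrite (bigD1 y) //= lerDl sumr_ge0.
apply: le_trans (ler_wpM2l (exp_coeff_ge0 _ t_ge0) (@iter_shift_op_norm j f _ fK x)) _.
by rewrite /exp_coeff /= exprMn le_eqVlt; apply/orP; left; apply/eqP; ring.
Qed.

Lemma shift_exp_cvg f x : series (shift_exp_term f x) @ \oo --> shift_exp f x.
Proof.
apply: (@is_cvg_series_exp_dominated _ _ (c * t)); first exact: mulr_ge0.
exact: shift_exp_term_bound.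
Qed.

Lemma cvg_exp_op_series f x :
  (fun n => \sum_(0 <= k < n) (t ^+ k / k`!%:R * iter k A f x)) @ \oo -->
  shift_exp f x * expR (- (c * t)).
Proof.
have -> : (fun n => \sum_(0 <= k < n) (t ^+ k / k`!%:R * iter k A f x)) =
  (fun n => \sum_(k < n) \sum_(j < k.+1)
     shift_exp_term f x j * exp_coeff (- (c * t)) (k - j)%N).
  apply/funext => n; rewrite big_mkord; apply: eq_bigr => k _.
  rewrite iter_op_binomial mulr_sumr; apply: eq_bigr => j _.
  have jk : (j <= k)%N by rewrite -ltnS.
  rewrite /shift_exp_term /exp_coeff /= -mulNr exprMn.
  have -> : t ^+ k = t ^+ j * t ^+ (k - j) by rewrite -exprD subnKC.
  transitivity (t ^+ j * t ^+ (k - j) * (- c) ^+ (k - j) * iter j shift_op f x *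
    ('C(k, j)%:R / k`!%:R)); first by ring.
  by rewrite bin_div_fact //; ring.
have -> : expR (- (c * t)) = limn (series (exp_coeff (- (c * t)))) by [].
apply: (@cvg_cauchy_product_exp _ _ _ (c * t) (c * t) (\sum_y `|f y|)).
- exact: mulr_ge0.
- exact: mulr_ge0.
- exact: shift_exp_term_bound.
- move=> m; rewrite /exp_coeff /= normrM normrX normrN.
  by rewrite (ger0_norm (mulr_ge0 c_ge0 t_ge0)) normfV ger0_norm.
Qed.

Lemma shift_exp_linear : op_linear shift_exp.
Proof.
move=> k1 k2 f g; apply/funext => x; apply: cvg_lim => //.
have -> : series (shift_exp_term (fun x => k1 * f x + k2 * g x) x) =
   (fun n => k1 * series (shift_exp_term f x) n + k2 * series (shift_exp_term g x) n).
  apply/funext => n; rewrite !seriesEord /= !mulr_sumr -big_split /=.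
  by apply: eq_bigr => j _; rewrite /shift_exp_term iter_shift_op_linear /=; ring.
by apply: cvgD; apply: cvgMl_tmp; exact: shift_exp_cvg.
Qed.

Lemma shift_exp_mono f g x : (forall y, f y <= g y) -> shift_exp f x <= shift_exp g x.
Proof.
move=> fg; apply: ler_lim; [exact: shift_exp_cvg | exact: shift_exp_cvg |].
apply: nearW => n; rewrite !seriesEord /=; apply: ler_sum => j _.
by rewrite /shift_exp_term ler_wpM2l ?exp_coeff_ge0 //; exact: iter_shift_op_mono.
Qed.

Lemma shift_exp_norm h x : `|shift_exp h x| <= shift_exp (fun y => `|h y|) x.
Proof.
rewrite ler_norml; apply/andP; split; last first.
  by apply: shift_exp_mono => y; exact: ler_norm.
have -> : - shift_exp (fun y => `|h y|) x = shift_exp (fun y => - 1 * `|h y|) x.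
  by rewrite (op_linearZ shift_exp_linear) mulN1r.
by apply: shift_exp_mono => y; rewrite mulN1r lerNl ler_normr lexx orbT.
Qed.

Lemma shift_exp_sum (I : Type) (r : seq I) (F : I -> T -> R) x :
  shift_exp (fun y => \sum_(i <- r) F i y) x = \sum_(i <- r) shift_exp (F i) x.
Proof.
have := op_linear_sum shift_exp_linear r (fun _ => 1) F => /(congr1 (fun G => G x)).
under eq_fun do under eq_bigr do rewrite mul1r.
by under [RHS]eq_bigr do rewrite mul1r.
Qed.

Lemma shift_exp_le_expR V mu x : (forall y, 0 <= V y) -> 0 <= mu ->
  (forall y, shift_op V y <= mu * V y) -> shift_exp V x <= expR (mu * t) * V x.
Proof.
move=> V0 mu0 HV.
have Hc : (fun n => series (exp_coeff (mu * t)) n * V x) @ \oo --> expR (mu * t) * V x.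
  by apply: cvgMr_tmp; exact: cvg_series_exp_coeff.
rewrite -(cvg_lim _ Hc) //.
apply: ler_lim; [exact: shift_exp_cvg | exact: cvgP Hc |].
apply: nearW => n; rewrite !seriesEord /= mulr_suml; apply: ler_sum => j _.
rewrite /shift_exp_term /exp_coeff /= exprMn.
apply: le_trans (ler_wpM2l _ (@iter_shift_op_le_exprn j V mu V0 mu0 HV x)) _.
  by rewrite divr_ge0 ?exprn_ge0.
by rewrite le_eqVlt; apply/orP; left; apply/eqP; ring.
Qed.

End ShiftedOperator.
Arguments shift_op {R T} A c f x.
Arguments shift_exp {R T} A c t f x.

Section Sites.
Variable N : nat.

Lemma occ_ord (eta : config N) (i : 'I_N.-1) : occ eta i.+1 = eta i.
Proof.
rewrite /occ /= (insubT (fun i => i < N.-1)%N (ltn_ord i)) /=.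
by congr (eta _); apply: val_inj.
Qed.

Lemma site_ind (P : nat -> Prop) : (forall i : 'I_N.-1, P i.+1) ->
  forall s, (1 <= s)%N -> (s < N)%N -> P s.
Proof.
move=> H s s1 sN.
have si : (s.-1 < N.-1)%N by rewrite -ltnS prednK // (leq_trans sN) // leqSpred.
by have := H (Ordinal si); rewrite /= prednK.
Qed.

Lemma occ_swap (eta : config N) x s : (1 <= s)%N -> (s < N)%N ->
  occ (swap eta x) s = if s == x then occ eta x.+1 else if s == x.+1 then occ eta x
                       else occ eta s.
Proof.
by move: s; apply: site_ind => i; rewrite occ_ord /swap ffunE occ_ord.
Qed.

Lemma occ_flip (eta : config N) y s : (1 <= s)%N -> (s < N)%N ->
  occ (flip eta y) s = if s == y then ~~ occ eta s else occ eta s.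
Proof.
by move: s; apply: site_ind => i; rewrite !occ_ord /flip ffunE.
Qed.

End Sites.

Section BasicCoupling.
Variables (R : realType) (N : nat) (alpha beta : R).
Notation pair := (config N * config N)%type.

Definition flip_rate (p : R) (b : bool) :=
  2^-1 * (p * (1 - b2R R b) + (1 - p) * b2R R b).

Definition coupled_flip (p : R) (y : nat) (G : pair -> R) (q : pair) : R :=
  if occ q.1 y == occ q.2 y then
    flip_rate p (occ q.1 y) * (G (flip q.1 y, flip q.2 y) - G q)
  else flip_rate p (occ q.1 y) * (G (flip q.1 y, q.2) - G q)
     + flip_rate p (occ q.2 y) * (G (q.1, flip q.2 y) - G q).

Definition coupled_gen (G : pair -> R) (q : pair) : R :=
  2^-1 * (\sum_(1 <= x < N.-1) (G (swap q.1 x, swap q.2 x) - G q))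
  + coupled_flip alpha 1 G q + coupled_flip beta N.-1 G q.

Lemma coupled_gen_fst g q : coupled_gen (fun p => g p.1) q = genL alpha beta g q.1.
Proof.
rewrite /coupled_gen /genL /coupled_flip /=.
by case: ifP => _; case: ifP => _; rewrite /flip_rate /= ?subrr ?mulr0 ?addr0.
Qed.

Lemma coupled_gen_snd g q : coupled_gen (fun p => g p.2) q = genL alpha beta g q.2.
Proof.
rewrite /coupled_gen /genL /coupled_flip /=.
by case: ifP => [/eqP ->|_]; case: ifP => [/eqP ->|_];
  rewrite /flip_rate /= ?subrr ?mulr0 ?add0r.
Qed.

Lemma coupled_gen_linear : op_linear coupled_gen.
Proof.
move=> k1 k2 f g; apply/funext => q; rewrite /coupled_gen /coupled_flip.
set S := \sum_(_ <= _ < _) _.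
have -> : S = k1 * (\sum_(1 <= x < N.-1) (f (swap q.1 x, swap q.2 x) - f q))
            + k2 * (\sum_(1 <= x < N.-1) (g (swap q.1 x, swap q.2 x) - g q)).
  by rewrite /S !mulr_sumr -big_split /=; apply: eq_bigr => x _; ring.
by case: ifP => _; case: ifP => _; ring.
Qed.

Lemma coupled_gen_cst : coupled_gen (fun _ => 1) = fun _ => 0.
Proof.
apply/funext => q; rewrite /coupled_gen /coupled_flip !subrr !mulr0 !addr0.
by rewrite big1 ?mulr0 ?add0r //; case: ifP; case: ifP => _ _; rewrite ?addr0.
Qed.

Lemma flip_rate_bound p b : 0 <= p -> p <= 1 ->
  0 <= flip_rate p b /\ flip_rate p b <= 2^-1.
Proof. by move=> p0 p1; rewrite /flip_rate /b2R; case: b => /=; split; lra. Qed.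

Lemma coupled_flip_ge p y f q : 0 <= p -> p <= 1 -> (forall z, 0 <= f z) ->
  - f q <= coupled_flip p y f q.
Proof.
move=> p0 p1 f0; rewrite /coupled_flip.
have [r0 r1] := flip_rate_bound p (occ q.1 y) p0 p1.
have [s0 s1] := flip_rate_bound p (occ q.2 y) p0 p1.
case: ifP => _; first by have := f0 (flip q.1 y, flip q.2 y); have := f0 q; nra.
by have := f0 (flip q.1 y, q.2); have := f0 (q.1, flip q.2 y); have := f0 q; nra.
Qed.

(* The total jump rate out of a pair is at most [N]. *)
Lemma coupled_gen_shift_ge0 : (2 <= N)%N ->
  0 <= alpha -> alpha <= 1 -> 0 <= beta -> beta <= 1 ->
  forall f, (forall z, 0 <= f z) -> forall q, 0 <= coupled_gen f q + N%:R * f q.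
Proof.
move=> N2 a0 a1 b0 b1 f f0 q.
set M : R := (N.-1 - 1)%:R.
have hS : - (f q * M) <= \sum_(1 <= x < N.-1) (f (swap q.1 x, swap q.2 x) - f q).
  rewrite mulr_natr -sumr_const_nat -sumrN; apply: ler_sum => x _.
  by rewrite lerDr f0.
have hM : M + 4 <= 2 * N%:R.
  have : (N.-1 - 1 + 4 <= 2 * N)%N by lia.
  by rewrite -(ler_nat R) natrD natrM.
have h1 := @coupled_flip_ge alpha 1 f q a0 a1 f0.
have h2 := @coupled_flip_ge beta N.-1 f q b0 b1 f0.
have := mulr_ge0 (f0 q) (_ : 0 <= 2 * N%:R - M - 4); rewrite /coupled_gen; lra.
Qed.

End BasicCoupling.
Arguments flip_rate {R}.
Arguments coupled_flip {R N}.
Arguments coupled_gen {R N}.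

Lemma sum_nat_eq_mul (R : nzRingType) m n y (F : nat -> R) :
  \sum_(m <= s < n) (s == y)%:R * F s = ((m <= y)%N && (y < n)%N)%:R * F y.
Proof.
elim: n => [|n IH]; first by rewrite big_geq // ltn0 andbF mul0r.
have [mn|nm] := leqP m n; last first.
  rewrite big_geq //; case: (leqP m y) => my /=; last by rewrite mul0r.
  by rewrite ltnNge (leq_trans nm my) mul0r.
rewrite big_nat_recr //= IH.
have [<-|ny] := eqVneq n y.
  by rewrite ltnn andbF mul0r add0r leqnn andbT mn /= mul1r.
rewrite /= mul0r addr0; congr (_%:R * _); congr (nat_of_bool _).
by rewrite ltnS (leq_eqVlt y n) (eq_sym y n) (negbTE ny).
Qed.

Lemma summation_by_parts (R : comNzRingType) (d W : nat -> R) n : (1 <= n)%N -> W 0%N = 0 ->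
  \sum_(1 <= x < n) (d x - d x.+1) * (W x.+1 - W x) - d 1%N * W 1%N - d n * W n
  + d n * W n.+1 = \sum_(1 <= x < n.+1) d x * (W x.+1 + W x.-1 - 2 * W x).
Proof.
move=> n1 W0; elim: n n1 => [//|n IH] _.
have [->|n0] := posnP n; first by rewrite big_geq // big_nat1 /= W0; ring.
by rewrite big_nat_recr //= [in RHS]big_nat_recr //= -(IH n0); ring.
Qed.

Section CouplingDistance.
Variable R : realType.
Context {N : nat}.
Notation pair := (config N * config N)%type.

Definition discrepancy (q : pair) s : R := b2R R (occ q.1 s != occ q.2 s).

Definition dist_weight (s : nat) : R := (s * (N - s))%:R.

Definition coupling_dist (q : pair) : R :=
  \sum_(1 <= s < N) discrepancy q s * dist_weight s.

Lemma discrepancy_bound q s : 0 <= discrepancy q s /\ discrepancy q s <= 1.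
Proof. by rewrite /discrepancy /b2R; case: (_ != _) => /=; split. Qed.

Lemma dist_weight_ge0 s : 0 <= dist_weight s.
Proof. by rewrite /dist_weight ler0n. Qed.

Lemma dist_weightE s : (s <= N)%N -> dist_weight s = s%:R * (N%:R - s%:R).
Proof. by move=> sN; rewrite /dist_weight natrM natrB. Qed.

Lemma dist_weight_le s : (s <= N)%N -> 4 * dist_weight s <= N%:R ^+ 2.
Proof.
by move=> sN; rewrite dist_weightE //; have := sqr_ge0 (N%:R - 2 * s%:R : R); nra.
Qed.

Lemma dist_weight_laplacian x : (1 <= x)%N -> (x < N)%N ->
  dist_weight x.+1 + dist_weight x.-1 - 2 * dist_weight x = -2.
Proof.
move=> x1 xN; rewrite !dist_weightE; [|lia|lia|lia].
have -> : (x.-1%:R : R) = x%:R - 1 by rewrite -{2}(prednK x1) -natr1; ring.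
by rewrite -natr1; ring.
Qed.

Lemma coupling_dist_ge0 q : 0 <= coupling_dist q.
Proof.
apply: sumr_ge0 => s _.
by apply: mulr_ge0; [exact: (discrepancy_bound q s).1 | exact: dist_weight_ge0].
Qed.

Lemma coupling_dist_sym (a b : config N) : coupling_dist (b, a) = coupling_dist (a, b).
Proof. by apply: eq_bigr => s _; rewrite /discrepancy eq_sym. Qed.

Lemma coupling_dist_le q : coupling_dist q <= N.-1%:R * (N%:R ^+ 2 / 4).
Proof.
apply: le_trans (_ : \sum_(1 <= s < N) (N%:R ^+ 2 / 4 : R) <= _); last first.
  by rewrite sumr_const_nat subn1 mulr_natl.
apply: ler_sum_nat => s /andP[_ sN].
have [d0 d1] := discrepancy_bound q s.
have := dist_weight_le s (ltnW sN); have := dist_weight_ge0 s; nra.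
Qed.

Lemma coupling_dist_neq q : q.1 != q.2 -> N.-1%:R <= coupling_dist q.
Proof.
move=> ne.
have /existsP [i Hi] : [exists i, q.1 i != q.2 i].
  rewrite -negb_forall; apply: contra ne => /forallP H.
  by apply/eqP/ffunP => i; apply/eqP; exact: H i.
rewrite /coupling_dist big_add1 /= big_mkord (bigD1 i) //=.
rewrite {1}/discrepancy !occ_ord Hi mul1r; apply: ler_wpDr.
  apply: sumr_ge0 => j _.
  by apply: mulr_ge0; [exact: (discrepancy_bound q _).1 | exact: dist_weight_ge0].
by rewrite /dist_weight ler_nat; have := ltn_ord i; nia.
Qed.

Lemma discrepancy_swap q x s : (1 <= s)%N -> (s < N)%N ->
  discrepancy (swap q.1 x, swap q.2 x) s =
  if s == x then discrepancy q x.+1 else if s == x.+1 then discrepancy q x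
  else discrepancy q s.
Proof.
move=> s1 sN; rewrite /discrepancy /= !occ_swap //.
by case: ifP => _ //; case: ifP.
Qed.

Lemma coupling_dist_swap q x : (1 <= x)%N -> (x < N.-1)%N ->
  coupling_dist (swap q.1 x, swap q.2 x) - coupling_dist q =
  (discrepancy q x - discrepancy q x.+1) * (dist_weight x.+1 - dist_weight x).
Proof.
move=> x1 xN; rewrite /coupling_dist -sumrB.
set d := discrepancy q.
rewrite (@eq_big_nat _ _ _ 1 N _ (fun s =>
      (s == x)%:R * ((d x.+1 - d x) * dist_weight s)
    + (s == x.+1)%:R * ((d x - d x.+1) * dist_weight s))); last first.
  move=> s /andP[s1 sN]; rewrite discrepancy_swap //.
  have [->|sx] := eqVneq s x; first by rewrite (ltn_eqF (ltnSn x)) /=; ring.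
  by have [->|sx1] := eqVneq s x.+1; rewrite /=; ring.
rewrite big_split /= !sum_nat_eq_mul.
have -> : ((1 <= x)%N && (x < N)%N) by apply/andP; split => //; lia.
have -> : ((1 <= x.+1)%N && (x.+1 < N)%N) by apply/andP; split => //; lia.
by rewrite /=; ring.
Qed.

Lemma coupling_dist_flip_fst q y : (1 <= y)%N -> (y < N)%N ->
  occ q.1 y != occ q.2 y ->
  coupling_dist (flip q.1 y, q.2) - coupling_dist q = - dist_weight y.
Proof.
move=> y1 yN ne; rewrite /coupling_dist -sumrB.
rewrite (@eq_big_nat _ _ _ 1 N _ (fun s => (s == y)%:R * (- dist_weight s))); last first.
  move=> s /andP[s1 sN]; rewrite /discrepancy /= occ_flip //.
  have [->|sy] := eqVneq s y; last by rewrite subrr mul0r.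
  by move: ne; case: (occ q.1 y); case: (occ q.2 y) => //= _; rewrite /b2R /=; ring.
by rewrite sum_nat_eq_mul y1 yN mul1r.
Qed.

Lemma coupling_dist_flip_snd q y : (1 <= y)%N -> (y < N)%N ->
  occ q.1 y != occ q.2 y ->
  coupling_dist (q.1, flip q.2 y) - coupling_dist q = - dist_weight y.
Proof.
move=> y1 yN ne; rewrite -coupling_dist_sym -[coupling_dist q]coupling_dist_sym.
by rewrite (@coupling_dist_flip_fst (q.2, q.1) y) // eq_sym.
Qed.

Lemma coupling_dist_flip_both q y : (1 <= y)%N -> (y < N)%N ->
  coupling_dist (flip q.1 y, flip q.2 y) - coupling_dist q = 0.
Proof.
move=> y1 yN; rewrite /coupling_dist -sumrB; apply: big1_seq => s /andP[_].
rewrite mem_index_iota => /andP[s1 sN]; rewrite /discrepancy /= !occ_flip //.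
case: ifP => _; last by rewrite subrr.
by case: (occ q.1 s); case: (occ q.2 s); rewrite /= subrr.
Qed.

Lemma coupled_flip_dist p y q : (1 <= y)%N -> (y < N)%N ->
  coupled_flip p y coupling_dist q = - (2^-1 * (discrepancy q y * dist_weight y)).
Proof.
move=> y1 yN; rewrite /coupled_flip; case: ifP => [/eqP e|/negbT ne].
  by rewrite coupling_dist_flip_both // mulr0 /discrepancy e eqxx /b2R /= mul0r mulr0 oppr0.
rewrite coupling_dist_flip_fst // coupling_dist_flip_snd // /discrepancy ne /b2R /=.
by move: ne; case: (occ q.1 y); case: (occ q.2 y) => //= _;
  rewrite /flip_rate /b2R /=; ring.
Qed.

Section Contraction.
Variables (alpha beta : R).
Hypothesis N2 : (2 <= N)%N.

Lemma coupled_gen_dist q :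
  coupled_gen alpha beta coupling_dist q = - \sum_(1 <= s < N) discrepancy q s.
Proof.
rewrite /coupled_gen (@eq_big_nat _ _ _ 1 N.-1 _ (fun x =>
    (discrepancy q x - discrepancy q x.+1) * (dist_weight x.+1 - dist_weight x)));
  last by move=> x /andP[x1 xN]; rewrite coupling_dist_swap.
rewrite !coupled_flip_dist //; [|lia|lia].
have := @summation_by_parts _ (discrepancy q) dist_weight N.-1 _ _.
rewrite (_ : N.-1.+1 = N); last lia.
rewrite (_ : dist_weight N = 0); last by rewrite /dist_weight subnn muln0.
rewrite (_ : dist_weight 0 = 0); last by rewrite /dist_weight mul0n.
rewrite (@eq_big_nat _ _ _ 1 N _ (fun x => discrepancy q x * (-2))); last first.
  by move=> x /andP[x1 xN]; rewrite dist_weight_laplacian.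
rewrite -mulr_suml mulr0 addr0 => /(_ _ erefl) H.
have {H}-> : \sum_(1 <= x < N.-1)
    (discrepancy q x - discrepancy q x.+1) * (dist_weight x.+1 - dist_weight x) =
  (\sum_(1 <= i < N) discrepancy q i) * -2
  + discrepancy q 1%N * dist_weight 1%N + discrepancy q N.-1 * dist_weight N.-1.
  by rewrite -H; [ring | lia].
by field.
Qed.

Lemma coupled_gen_dist_le q :
  coupled_gen alpha beta coupling_dist q <= - (4 / N%:R ^+ 2) * coupling_dist q.
Proof.
rewrite coupled_gen_dist mulNr lerN2 mulr_sumr.
apply: ler_sum_nat => s /andP[s1 sN].
have [d0 d1] := discrepancy_bound q s.
have hN : 0 < N%:R ^+ 2 :> R by rewrite exprn_gt0 // ltr0n; lia.
have -> : 4 / N%:R ^+ 2 * (discrepancy q s * dist_weight s) =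
    discrepancy q s * ((4 * dist_weight s) / N%:R ^+ 2) by ring.
rewrite -[leRHS]mulr1 ler_wpM2l // ler_pdivrMr // mul1r.
exact: dist_weight_le s (ltnW sN).
Qed.

End Contraction.
End CouplingDistance.

Section Indicators.
Variables (R : realType) (N : nat).

Lemma sum_mul_indic (F : config N -> R) xi : \sum_zeta F zeta * Defs.indic R xi zeta = F xi.
Proof.
rewrite (bigD1 xi) //= /Defs.indic /b2R eqxx mulr1 big1 ?addr0 // => z zx.
by rewrite (negbTE zx) mulr0.
Qed.

Lemma sum_indic (eta : config N) : \sum_xi Defs.indic R xi eta = 1.
Proof.
rewrite (bigD1 eta) //= /Defs.indic /b2R eqxx big1 ?addr0 // => z zx.
by rewrite eq_sym (negbTE zx).
Qed.

Lemma indic_ge0 (xi eta : config N) : 0 <= Defs.indic R xi eta.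
Proof. by rewrite /Defs.indic /b2R ler0n. Qed.

Lemma sum_indic_dist_le (q : config N * config N) : (2 <= N)%N ->
  \sum_xi `|Defs.indic R xi q.1 - Defs.indic R xi q.2| <= (2 / N.-1%:R) * coupling_dist R q.
Proof.
move=> N2; have N1 : 0 < N.-1%:R :> R by rewrite ltr0n; lia.
have c_ge0 : 0 <= 2 / N.-1%:R :> R by rewrite divr_ge0 // ltW.
have [e|ne] := eqVneq q.1 q.2.
  rewrite e big1 => [|xi _]; last by rewrite subrr normr0.
  exact: mulr_ge0 c_ge0 (coupling_dist_ge0 R q).
apply: le_trans (_ : \sum_xi (Defs.indic R xi q.1 + Defs.indic R xi q.2) <= _).
  apply: ler_sum => xi _; apply: le_trans (ler_normB _ _) _.
  by rewrite !ger0_norm ?indic_ge0.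
rewrite big_split /= !sum_indic.
apply: le_trans (ler_wpM2l c_ge0 (coupling_dist_neq R q ne)).
by rewrite divfK ?lt0r_neq0 //; lra.
Qed.

End Indicators.

Section MixingBound.
Context {R : realType} {N : nat} {alpha beta : R} {nu : config N -> R}.
Hypotheses (N2 : (2 <= N)%N) (alpha_gt0 : 0 < alpha) (alpha_le_beta : alpha <= beta)
  (beta_lt1 : beta < 1) (nu_stationary : stationary alpha beta nu).
Notation pair := (config N * config N)%type.
Notation L := (coupled_gen alpha beta : (pair -> R) -> pair -> R).
Notation c := (N%:R : R).

Let c_ge0 : 0 <= c. Proof. exact: ler0n. Qed.
Let L_linear : op_linear L. Proof. exact: coupled_gen_linear. Qed.
Let L_cst : L (fun _ => 1) = fun _ => 0. Proof. exact: coupled_gen_cst. Qed.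
Let L_shift_ge0 f : (forall x, 0 <= f x) -> forall x, 0 <= L f x + c * f x.
Proof.
apply: coupled_gen_shift_ge0 => //; first exact: ltW.
- exact: le_trans alpha_le_beta (ltW beta_lt1).
- exact: le_trans (ltW alpha_gt0) alpha_le_beta.
- exact: ltW.
Qed.

Lemma iter_coupled_gen_fst k g q :
  iter k L (fun p => g p.1) q = iter k (genL alpha beta) g q.1.
Proof.
elim: k q => [//|k IH] q /=.
by rewrite -coupled_gen_fst; congr L; apply/funext => p; exact: IH.
Qed.

Lemma iter_coupled_gen_snd k g q :
  iter k L (fun p => g p.2) q = iter k (genL alpha beta) g q.2.
Proof.
elim: k q => [//|k IH] q /=.
by rewrite -coupled_gen_snd; congr L; apply/funext => p; exact: IH.
Qed.

Context {t : R}.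
Hypothesis t_ge0 : 0 <= t.

Notation E := (shift_exp L c t).

Let cvg_coupled_exp f q :
  (fun n => \sum_(0 <= k < n) (t ^+ k / k`!%:R * iter k L f q)) @ \oo -->
  E f q * expR (- (c * t)).
Proof. by apply: cvg_exp_op_series. Qed.

Lemma Pt_coupled_fst eta zeta xi :
  Pt alpha beta t eta xi = E (fun p => Defs.indic R xi p.1) (eta, zeta) * expR (- (c * t)).
Proof.
apply: cvg_lim => //.
under eq_fun do under eq_bigr do rewrite -(iter_coupled_gen_fst _ _ (eta, zeta)).
exact: (cvg_coupled_exp _ (eta, zeta)).
Qed.

Lemma Pt_coupled_snd eta zeta xi :
  Pt alpha beta t zeta xi = E (fun p => Defs.indic R xi p.2) (eta, zeta) * expR (- (c * t)).
Proof.
apply: cvg_lim => //.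
under eq_fun do under eq_bigr do rewrite -(iter_coupled_gen_snd _ _ (eta, zeta)).
exact: (cvg_coupled_exp _ (eta, zeta)).
Qed.

Lemma cvg_Pt_series (zeta xi : config N) :
  (fun n => \sum_(0 <= k < n)
     (t ^+ k / k`!%:R * iter k (genL alpha beta) (Defs.indic R xi) zeta)) @ \oo -->
  Pt alpha beta t zeta xi.
Proof.
rewrite (Pt_coupled_snd zeta zeta).
under eq_fun do under eq_bigr do rewrite -(iter_coupled_gen_snd _ _ (zeta, zeta)).
exact: (cvg_coupled_exp _ (zeta, zeta)).
Qed.

(* Already every partial sum of the series of [Pt] preserves [nu]: the terms
   with [k > 0] vanish by stationarity. *)
Lemma stationary_Pt xi : \sum_zeta nu zeta * Pt alpha beta t zeta xi = nu xi.
Proof.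
case: nu_stationary => _ _ nuL.
pose S zeta n :=
  \sum_(0 <= k < n) (t ^+ k / k`!%:R * iter k (genL alpha beta) (Defs.indic R xi) zeta).
have cvg_S : (fun n => \sum_zeta nu zeta * S zeta n) @ \oo -->
    \sum_zeta nu zeta * Pt alpha beta t zeta xi.
  apply: (cvg_big (@add_continuous R^o)) => // zeta _.
  by apply: cvgMl_tmp; exact: cvg_Pt_series.
rewrite -(cvg_lim _ cvg_S) //; apply: lim_near_cst => //; near=> n.
have n0 : (0 < n)%N by near: n; exists 1%N.
under eq_bigr do rewrite mulr_sumr.
rewrite exchange_big /= big_ltn // [X in _ + X]big1_seq ?addr0; last first.
  move=> k /andP[_]; rewrite mem_index_iota => /andP[k1 _].
  rewrite -(prednK k1); under eq_bigr do rewrite mulrCA.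
  by rewrite -mulr_sumr /= nuL mulr0.
under eq_bigr do rewrite expr0 fact0 divr1 mul1r.
exact: sum_mul_indic.
Unshelve. all: by end_near.
Qed.

Lemma Pt_dist_le_coupled (eta zeta : config N) :
  \sum_xi `|Pt alpha beta t eta xi - Pt alpha beta t zeta xi| <=
  2 / N.-1%:R * E (coupling_dist R) (eta, zeta) * expR (- (c * t)).
Proof.
pose q : pair := (eta, zeta).
pose e := expR (- (c * t)).
have e_gt0 : 0 < e := expR_gt0 _.
have PtE xi : Pt alpha beta t eta xi - Pt alpha beta t zeta xi =
    E (fun p => 1 * Defs.indic R xi p.1 + (-1) * Defs.indic R xi p.2) q * e.
  rewrite (Pt_coupled_fst eta zeta) (Pt_coupled_snd eta zeta).
  by rewrite shift_exp_linear //= /e /q; ring.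
under eq_bigr do rewrite PtE normrM (gtr0_norm e_gt0).
rewrite -mulr_suml ler_pM2r // (_ : _ * E _ q =
    E (fun p => 2 / N.-1%:R * coupling_dist R p) q); last first.
  by rewrite (@op_linearZ _ _ (shift_exp L c t)) //; apply: shift_exp_linear.
apply: le_trans (_ : \sum_xi E (fun p => `|1 * Defs.indic R xi p.1
                                       + (-1) * Defs.indic R xi p.2|) q <= _).
  by apply: ler_sum => xi _; apply: shift_exp_norm.
rewrite -shift_exp_sum //; apply: shift_exp_mono => // p.
by under eq_bigr do rewrite mul1r mulN1r; exact: sum_indic_dist_le.
Qed.

Lemma shift_exp_coupling_dist_le q :
  E (coupling_dist R) q <= expR ((c - 4 / c ^+ 2) * t) * (N.-1%:R * (c ^+ 2 / 4)).
Proof.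
have mu_ge0 : 0 <= c - 4 / c ^+ 2.
  have c2 : 2 <= c by rewrite (ler_nat R 2 N).
  have : 4 / c ^+ 2 <= 1 by rewrite ler_pdivrMr ?exprn_gt0 // ?mul1r; nra.
  lra.
apply: le_trans (_ : _ <= expR ((c - 4 / c ^+ 2) * t) * coupling_dist R q) _.
  apply: shift_exp_le_expR => //; first exact: coupling_dist_ge0.
  by move=> y; rewrite /shift_op; have := coupled_gen_dist_le R alpha beta N2 y; lra.
by rewrite ler_wpM2l ?expR_ge0 // coupling_dist_le.
Qed.

Lemma Pt_dist_le (eta zeta : config N) :
  \sum_xi `|Pt alpha beta t eta xi - Pt alpha beta t zeta xi| <=
  expR (- (4 / c ^+ 2 * t)) * (c ^+ 2 / 2).
Proof.
apply: le_trans (Pt_dist_le_coupled eta zeta) _.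
have N1 : 0 < N.-1%:R :> R by rewrite ltr0n; lia.
have -> : expR (- (4 / c ^+ 2 * t)) * (c ^+ 2 / 2) =
    2 / N.-1%:R * (expR ((c - 4 / c ^+ 2) * t) * (N.-1%:R * (c ^+ 2 / 4)))
    * expR (- (c * t)).
  have <- : expR ((c - 4 / c ^+ 2) * t) * expR (- (c * t)) = expR (- (4 / c ^+ 2 * t)).
    by rewrite -expRD; congr expR; ring.
  by field; rewrite lt0r_neq0.
rewrite ler_pM2r ?expR_gt0 // ler_wpM2l ?divr_ge0 //.
exact: shift_exp_coupling_dist_le.
Qed.

Lemma tv_Pt_le (eta : config N) :
  tv_dist (Pt alpha beta t eta) nu <= expR (- (4 / c ^+ 2 * t)) * (c ^+ 2 / 4).
Proof.
case: nu_stationary => nu_ge0 nu_sum1 _.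
set K := expR (- (4 / c ^+ 2 * t)) * (c ^+ 2 / 2).
rewrite (_ : _ * (c ^+ 2 / 4) = 2^-1 * K); last by rewrite /K; field.
rewrite /tv_dist ler_wpM2l //.
have PtE xi : Pt alpha beta t eta xi - nu xi =
    \sum_zeta nu zeta * (Pt alpha beta t eta xi - Pt alpha beta t zeta xi).
  under eq_bigr do rewrite mulrBr.
  by rewrite sumrB -mulr_suml nu_sum1 mul1r stationary_Pt.
apply: le_trans (_ : \sum_xi \sum_zeta nu zeta *
      `|Pt alpha beta t eta xi - Pt alpha beta t zeta xi| <= _).
  apply: ler_sum => xi _; rewrite PtE; apply: le_trans (ler_norm_sum _ _ _) _.
  by apply: ler_sum => zeta _; rewrite normrM ger0_norm.
rewrite exchange_big /=.
apply: le_trans (_ : \sum_zeta nu zeta * K <= _); last by rewrite -mulr_suml nu_sum1 mul1r.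
apply: ler_sum => zeta _; rewrite -mulr_sumr ler_wpM2l //.
exact: Pt_dist_le.
Qed.

End MixingBound.

Lemma expRN2_sqr_le (R : realType) (x : R) : 0 <= x ->
  expR (- (2 * x)) * (x ^+ 2 / 4) <= 4^-1.
Proof.
move=> x0; have sqr_le : x ^+ 2 <= expR (2 * x).
  rewrite mulr2n mulrDl mul1r expRD expr2.
  by have ex := expR_ge1Dx x; apply: ler_pM => //; lra.
have E_gt0 : 0 < expR (2 * x) := expR_gt0 _.
rewrite expRN; apply: le_trans (_ : _ <= (expR (2 * x))^-1 * (expR (2 * x) / 4)) _.
  by apply: ler_wpM2l; [rewrite invr_ge0 ltW | lra].
by rewrite mulrA mulVf ?mul1r ?lt0r_neq0.
Qed.

Theorem mainTheorem11 (R : realType) (N : nat) (alpha beta : R)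
  (nu : config N -> R) :
  (2 <= N)%N -> 0 < alpha -> alpha <= beta -> beta < 1 ->
  stationary alpha beta nu ->
  Tmix_set alpha beta nu !=set0 /\
  Tmix alpha beta nu <= 2^-1 * (N%:R) ^+ 3.
Proof.
move=> N2 alpha_gt0 alpha_le_beta beta_lt1 nu_stationary.
set t := 2^-1 * N%:R ^+ 3.
have c_gt0 : 0 < N%:R :> R by rewrite ltr0n; lia.
have t_gt0 : 0 < t by rewrite /t mulr_gt0 ?exprn_gt0.
have t_mix : Tmix_set alpha beta nu t.
  split => //; rewrite /max_tv; elim/big_ind: _ => //.
    by move=> x y hx hy; rewrite ge_max hx hy.
  move=> eta _; apply: le_trans (tv_Pt_le N2 alpha_gt0 alpha_le_beta beta_lt1
      nu_stationary (ltW t_gt0) eta) _.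
  rewrite (_ : 4 / N%:R ^+ 2 * t = 2 * N%:R); last by rewrite /t; field; lra.
  exact: expRN2_sqr_le (ltW c_gt0).
split; first by exists t.
by apply: ge_inf t_mix; exists 0 => y [y_gt0 _]; exact: ltW.
Qed.
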